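(* Let $G=(V,E)$ be an undirected graph on $n$ vertices, let $\alpha\in(0,1)$, and let the jump distribution be uniform, $q_w=1/n$ for all $w\in V$. Suppose $u,v\in V$ are distinct non-adjacent vertices, $v$ has at least one neighbour, and there is a graph automorphism $\sigma$ of $G$ with $\sigma(v)=u$ and $\sigma(u)=v$. Let $G'=(V,E\cup\{uv\})$. Then $$\pi^{G'}_v>\pi^{G}_v\quad\text{and}\quad\pi^{G'}_u>\pi^{G}_u.$$
   Context: For an undirected graph $H$ on $V$, the PageRank of a vertex $w$ with at least one neighbour is $\pi^H_w=\alpha\,\frac{\sum_{x\in V}q_x\phi_{xw}}{1-\frac{1-\alpha}{|\Gamma(w)|}\sum_{i\in\Gamma(w)}\phi_{iw}}$, where $\Gamma(w)$ is the neighbour set in $H$ and $\phi_{xw}$ is the probability that an $\alpha$-random walk on $H$ (at each step with probability $\alpha$ it jumps to a vertex drawn from $\bm q$, otherwise moves to a uniformly random neighbour; a vertex with no neighbours forces a jump) started at $x$ visits $w$ before its first jump. When $H$ has no isolated vertices this is the stationary probability of $w$ under the $\alpha$-random walk. A graph automorphism is a permutation $\sigma$ of $V$ with $\sigma(a)\sigma(b)\in E$ iff $ab\in E$. *)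

From Stdlib Require Import Reals ClassicalEpsilon.
From mathcomp Require Import all_boot.

Set Implicit Arguments.
Unset Strict Implicit.
Unset Printing Implicit Defensive.

Local Open Scope R_scope.

Definition rsum (T : finType) (P : pred T) (f : T -> R) : R :=
  \big[Rplus/0]_(x | P x) f x.

(* A graph on the finite vertex set T is given by its adjacency relation e
   (undirected simple graph: e symmetric and irreflexive). *)
Definition deg (T : finType) (e : rel T) (x : T) : nat := #|[pred y | e x y]|.

(* phik e a w k x = probability that the a-random walk on e started at x
   visits w at one of the times 0..k, before its first jump.
   At a vertex x <> w: with prob. a it jumps (walk stops, w not visited);
   otherwise it moves to a uniform neighbour; an isolated vertex forces a jump. *)
Fixpoint phik (T : finType) (e : rel T) (a : R) (w : T) (k : nat) (x : T) : R :=
  match k with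
  | O => if x == w then 1 else 0
  | S k' =>
      if x == w then 1
      else if deg e x == 0%N then 0
      else (1 - a) / INR (deg e x) * rsum (e x) (phik e a w k')
  end.

(* phi e a x w = probability that the walk started at x visits w before its
   first jump = lim_k phik e a w k x (the sequence is nondecreasing, bounded). *)
Definition phi (T : finType) (e : rel T) (a : R) (x w : T) : R :=
  epsilon (inhabits 0) (fun l => Un_cv (fun k => phik e a w k x) l).

Definition pagerank (T : finType) (e : rel T) (a : R) (q : T -> R) (w : T) : R :=
  a * rsum predT (fun x => q x * phi e a x w)
  / (1 - (1 - a) / INR (deg e w) * rsum (e w) (fun i => phi e a i w)).

Definition add_edge (T : finType) (e : rel T) (u v : T) : rel T :=
  fun x y => e x y || ((x == u) && (y == v)) || ((x == v) && (y == u)).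

(* Write step_op f x for (1 - a) times the average of f over
   the neighbours of x (0 at isolated x).  The visit probabilities phi . w
   satisfy the first-step equation phi x w = step_op (phi . w) x for x <> w,
   so green w := phi . w / (1 - return probability of w) solves
   green w = delta w + step_op (green w).  By the maximum principle
   (superharmonic functions are nonnegative) this system has unique
   solutions, and with uniform jumps the PageRank of w is (a / n) times the
   total mass  sum_x green w x.

   The key lemma green_mass_increases expresses the old green v in the new
   graph as r_v green' v + r_u green' u, so that by the symmetry the old
   mass is (r_v + r_u) < 1 times the new one.  The theorem follows since
   the swap also identifies the masses at u and at v. *)
From Stdlib Require Import Reals Lra Lia ClassicalEpsilon.
From HB Require Import structures.
From mathcomp Require Import all_boot.

Set Implicit Arguments.
Unset Strict Implicit.
Unset Printing Implicit Defensive.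

Local Open Scope R_scope.

(* Register addition and multiplication on R as monoid laws, so that the
   bigop lemmas (splitting, distributivity) apply to rsum. *)
HB.instance Definition _ := Monoid.isComLaw.Build R 0 Rplus
  (fun x y z => esym (Rplus_assoc x y z)) Rplus_comm Rplus_0_l.
HB.instance Definition _ := Monoid.isMulLaw.Build R 0 Rmult Rmult_0_l Rmult_0_r.
HB.instance Definition _ := Monoid.isAddLaw.Build R Rmult Rplus
  Rmult_plus_distr_r Rmult_plus_distr_l.

Lemma cv_bnd (u : nat -> R) l lo hi :
  (forall k, lo <= u k <= hi) -> Un_cv u l -> lo <= l <= hi.
Proof.
move=> u_bnd u_cv; split; apply: Rnot_lt_le => l_out.
- have [N HN] := u_cv (lo - l) ltac:(lra); have := HN N (le_n N); have := u_bnd N.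
  by rewrite /R_dist => ? /Rabs_def2; lra.
- have [N HN] := u_cv (l - hi) ltac:(lra); have := HN N (le_n N); have := u_bnd N.
  by rewrite /R_dist => ? /Rabs_def2; lra.
Qed.

Lemma cv_const (c : R) : Un_cv (fun _ => c) c.
Proof.
by move=> eps eps_gt0; exists 0%nat => n _; rewrite /R_dist Rminus_diag Rabs_R0.
Qed.

Section RealSums.
Variable T : finType.
Implicit Types (P : pred T) (f g : T -> R).

Lemma rsumD P f g : rsum P (fun x => f x + g x) = rsum P f + rsum P g.
Proof. exact: big_split. Qed.

Lemma rsumZ P c f : rsum P (fun x => c * f x) = c * rsum P f.
Proof. by rewrite /rsum big_distrr. Qed.

Lemma rsum_eq_fun P f g : (forall x, f x = g x) -> rsum P f = rsum P g.
Proof. by move=> fg; apply: eq_bigr => x _. Qed.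

Lemma rsum_eq_pred P Q f : P =1 Q -> rsum P f = rsum Q f.
Proof. exact: eq_bigl. Qed.

Lemma rsum_le P f g : (forall x, P x -> f x <= g x) -> rsum P f <= rsum P g.
Proof. by move=> fg; apply: (big_ind2 Rle) => //; [lra | move=> *; lra]. Qed.

Lemma rsum_const P c : rsum P (fun _ => c) = INR #|P| * c.
Proof.
rewrite /rsum big_const; elim: #|P| => [|n IHn]; first by rewrite /=; ring.
by rewrite iterS S_INR IHn; ring.
Qed.

Lemma rsum_ge_term P f y : (forall x, P x -> 0 <= f x) -> P y -> f y <= rsum P f.
Proof.
move=> f_ge0 Py; rewrite /rsum (bigD1 y) //=.
suff : 0 <= \big[Rplus/0]_(x | P x && (x != y)) f x by lra.
apply: (big_ind (Rle 0)) => [|*|x /andP[Px _]]; [lra | lra | exact: f_ge0].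
Qed.

Lemma rsum_predU1 P y f : ~~ P y ->
  rsum (fun x => P x || (x == y)) f = f y + rsum P f.
Proof.
move=> Pyn; rewrite /rsum (bigD1 y) /=; last by rewrite eqxx orbT.
congr (_ + _); apply: eq_bigl => x.
by case: (eqVneq x y) => [->|]; rewrite ?andbF ?andbT ?orbF // (negbTE Pyn).
Qed.

Lemma rsum_reindex (s : T -> T) P f : bijective s ->
  rsum P f = rsum (fun x => P (s x)) (fun x => f (s x)).
Proof. by move=> s_bij; rewrite /rsum (reindex s) //; exact: onW_bij. Qed.

Lemma rsum_cv P (f : nat -> T -> R) l :
  (forall x, Un_cv (fun k => f k x) (l x)) -> Un_cv (fun k => rsum P (f k)) (rsum P l).
Proof.
move=> f_cv; rewrite /rsum; elim: (index_enum T) => [|x r IHr].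
  by rewrite big_nil; apply: Un_cv_ext (cv_const 0) => k; rewrite big_nil.
rewrite big_cons; apply: Un_cv_ext => [k|]; first by rewrite big_cons; reflexivity.
by case: (P x); [exact: CV_plus | exact: IHr].
Qed.

Lemma exists_min f (x1 : T) : exists x0, forall x, f x0 <= f x.
Proof.
suff [x0 Hx0] : exists x0, forall x, x \in x1 :: enum T -> f x0 <= f x.
  by exists x0 => x; apply: Hx0; rewrite inE mem_enum orbT.
elim: (enum T) => [|y s [x0 IHs]].
  by exists x1 => x; rewrite inE => /eqP ->; lra.
have x0_le x : x \in x1 :: s -> f x0 <= f x := IHs x.
have [le_x0y|lt_yx0] := Rle_lt_dec (f x0) (f y).
  exists x0 => x; rewrite !inE => /or3P[/eqP->|/eqP->|xs] //.
  - by apply: x0_le; exact: mem_head.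
  - by apply: x0_le; rewrite inE xs orbT.
exists y => x; rewrite !inE => /or3P[/eqP->|/eqP->|xs].
- by have := x0_le x1; rewrite mem_head => /(_ isT); lra.
- lra.
- by have := x0_le x; rewrite inE xs orbT => /(_ isT); lra.
Qed.

End RealSums.

(* One step of the alpha-random walk that does not jump: with probability
   1 - a the walk moves to a uniform neighbour of x; at an isolated vertex
   it is forced to jump, so no mass survives. *)
Definition step_op (T : finType) (e : rel T) (a : R) (f : T -> R) (x : T) : R :=
  if deg e x == 0%nat then 0 else (1 - a) / INR (deg e x) * rsum (e x) f.

Definition solves (T : finType) (e : rel T) (a : R) (b f : T -> R) : Prop :=
  forall x, f x = b x + step_op e a f x.

Definition delta (T : finType) (w x : T) : R := if x == w then 1 else 0.

Section StepOperator.
Variables (T : finType) (e : rel T) (a : R).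
Hypotheses (a_gt0 : 0 < a) (a_lt1 : a < 1).
Implicit Types (f g b : T -> R).

Lemma deg_rsum x : INR (deg e x) = rsum (e x) (fun _ => 1).
Proof. by rewrite rsum_const Rmult_1_r. Qed.

Lemma deg_neq0 x y : e x y -> deg e x <> 0%nat.
Proof.
move=> exy; apply/eqP; rewrite -lt0n; apply/card_gt0P; by exists y.
Qed.

Lemma step_opD f g x :
  step_op e a (fun y => f y + g y) x = step_op e a f x + step_op e a g x.
Proof. by rewrite /step_op rsumD; case: eqP => _; ring. Qed.

Lemma step_opZ c f x : step_op e a (fun y => c * f y) x = c * step_op e a f x.
Proof. by rewrite /step_op rsumZ; case: eqP => _; ring. Qed.

Lemma step_op_const c x :
  step_op e a (fun _ => c) x = if deg e x == 0%nat then 0 else (1 - a) * c.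
Proof.
rewrite /step_op rsum_const -[INR #|_|]Rmult_1_r -rsum_const -deg_rsum.
by case: eqP => // /not_0_INR deg_x; field.
Qed.

Lemma step_op_le f g x :
  (forall y, e x y -> f y <= g y) -> step_op e a f x <= step_op e a g x.
Proof.
move=> fg; rewrite /step_op; case: eqP => [_|deg_x]; first lra.
apply: Rmult_le_compat_l; last exact: rsum_le.
apply: Rmult_le_pos; first lra.
by left; apply/Rinv_0_lt_compat/lt_0_INR; lia.
Qed.

Lemma step_op_bnd f x : (forall y, 0 <= f y <= 1) -> 0 <= step_op e a f x <= 1 - a.
Proof.
move=> f01.
have lo := step_op_le (f := fun _ => 0) (g := f) (x := x) (fun y _ => proj1 (f01 y)).
have hi := step_op_le (f := f) (g := fun _ => 1) (x := x) (fun y _ => proj2 (f01 y)).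
rewrite !step_op_const in lo hi; case: eqP lo hi => _; lra.
Qed.

(* Maximum principle: a superharmonic function (step_op f <= f) is
   nonnegative, because at a minimum x0 with f x0 < 0 the averaged value
   (1 - a) f x0 would exceed f x0. *)
Lemma superharmonic_ge0 f : (forall x, step_op e a f x <= f x) -> forall x, 0 <= f x.
Proof.
move=> f_super x; have [x0 x0_min] := exists_min f x.
suff : 0 <= f x0 by have := x0_min x; lra.
apply: Rnot_lt_le => f_x0_lt0.
have := step_op_le (f := fun _ => f x0) (g := f) (x := x0) (fun y _ => x0_min y).
have := f_super x0; rewrite step_op_const; case: eqP => _; nra.
Qed.

Lemma solves_unique b f g : solves e a b f -> solves e a b g -> forall x, f x = g x.
Proof.
move=> f_sol g_sol.
have super c x : step_op e a (fun y => c * f y + - c * g y) x <= c * f x + - c * g x.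
  by rewrite step_opD !step_opZ (f_sol x) (g_sol x); apply: Req_le; ring.
move=> x; have := superharmonic_ge0 (super 1) x.
have := superharmonic_ge0 (super (-1)) x; lra.
Qed.

Lemma solves_lin c1 c2 b1 b2 f1 f2 : solves e a b1 f1 -> solves e a b2 f2 ->
  solves e a (fun x => c1 * b1 x + c2 * b2 x) (fun x => c1 * f1 x + c2 * f2 x).
Proof. by move=> f1_sol f2_sol x; rewrite step_opD !step_opZ f1_sol f2_sol; ring. Qed.

Section Automorphism.
Variable s : T -> T.
Hypotheses (s_bij : bijective s) (s_aut : forall x y, e (s x) (s y) = e x y).

Lemma rsum_nbr_aut x f : rsum (e (s x)) f = rsum (e x) (fun y => f (s y)).
Proof. by rewrite (rsum_reindex _ _ s_bij); apply: rsum_eq_pred => y; rewrite s_aut. Qed.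

Lemma deg_aut x : deg e (s x) = deg e x.
Proof. by apply: INR_eq; rewrite !deg_rsum rsum_nbr_aut. Qed.

Lemma solves_aut b f :
  solves e a b f -> solves e a (fun x => b (s x)) (fun x => f (s x)).
Proof. by move=> f_sol x; rewrite f_sol /step_op deg_aut rsum_nbr_aut. Qed.

End Automorphism.
End StepOperator.

Section VisitProbability.
Variables (T : finType) (e : rel T) (a : R) (w : T).
Hypotheses (a_gt0 : 0 < a) (a_lt1 : a < 1).

Lemma phikS k x : phik e a w k.+1 x = if x == w then 1 else step_op e a (phik e a w k) x.
Proof. by []. Qed.

Lemma phik_bnd k x : 0 <= phik e a w k x <= 1.
Proof.
elim: k x => [|k IHk] x; first by rewrite /=; case: (x == w); lra.
rewrite phikS; case: (x == w); first lra.
by have := step_op_bnd e a_lt1 x IHk; lra.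
Qed.

Lemma phik_mono k x : phik e a w k x <= phik e a w k.+1 x.
Proof.
elim: k x => [|k IHk] x; rewrite phikS.
  rewrite /=; case: (x == w); first lra.
  exact: (proj1 (step_op_bnd e a_lt1 x (phik_bnd 0))).
rewrite phikS; case: (x == w); first lra.
exact: step_op_le.
Qed.

Lemma phi_cv x : Un_cv (fun k => phik e a w k x) (phi e a x w).
Proof.
rewrite /phi; apply: epsilon_spec.
have [l l_lim] := @growing_cv (fun k => phik e a w k x) (fun k => phik_mono k x)
  ltac:(exists 1 => _ [k ->]; exact: (proj2 (phik_bnd k x))).
by exists l.
Qed.

Lemma phi_bnd x : 0 <= phi e a x w <= 1.
Proof. exact: cv_bnd (fun k => phik_bnd k x) (phi_cv x). Qed.

Lemma phi_diag : phi e a w w = 1.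
Proof.
apply: UL_sequence (phi_cv w) _.
by apply: Un_cv_ext (cv_const 1) => -[|k] /=; rewrite eqxx.
Qed.

Lemma phi_first_step x : x != w -> phi e a x w = step_op e a (fun y => phi e a y w) x.
Proof.
move=> /negbTE xw.
have shifted_cv : Un_cv (fun k => phik e a w k.+1 x) (phi e a x w).
  move=> eps eps_gt0; have [N HN] := phi_cv x eps_gt0.
  by exists N => n Hn; apply: HN; lia.
apply: UL_sequence shifted_cv _; rewrite /step_op.
apply: Un_cv_ext => [k|]; first by rewrite phikS xw /step_op; reflexivity.
case: (deg e x == 0%nat); first exact: cv_const.
by apply: CV_mult; [exact: cv_const | apply: rsum_cv => y; exact: phi_cv].
Qed.

End VisitProbability.

(* return_prob w is the probability that the walk started at w comes back
   to w before jumping; green w x = phi x w / (1 - return_prob w) is the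
   expected number of visits to w before the first jump (Green's function). *)
Definition return_prob (T : finType) (e : rel T) (a : R) (w : T) : R :=
  (1 - a) / INR (deg e w) * rsum (e w) (fun y => phi e a y w).

Definition green (T : finType) (e : rel T) (a : R) (w x : T) : R :=
  / (1 - return_prob e a w) * phi e a x w.

Lemma pagerank_green (T : finType) (e : rel T) (a : R) (w : T) :
  pagerank e a (fun _ => / INR #|T|) w = a / INR #|T| * rsum predT (green e a w).
Proof.
by rewrite /pagerank -/(return_prob e a w) /green !rsumZ /Rdiv; ring.
Qed.

Section Green.
Variables (T : finType) (e : rel T) (a : R).
Hypotheses (a_gt0 : 0 < a) (a_lt1 : a < 1).
Variable w : T.
Hypothesis deg_w : deg e w <> 0%nat.

Lemma return_probE : return_prob e a w = step_op e a (fun y => phi e a y w) w.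
Proof. by rewrite /step_op; move/eqP/negbTE: deg_w => ->. Qed.

Lemma return_prob_bnd : 0 <= return_prob e a w <= 1 - a.
Proof. by rewrite return_probE; apply: step_op_bnd => // y; exact: phi_bnd. Qed.

Lemma green_solves : solves e a (delta w) (green e a w).
Proof.
have r_bnd := return_prob_bnd.
move=> x; rewrite {2}/green step_opZ /green /delta; case: (eqVneq x w) => [->|xw].
  by rewrite phi_diag // -return_probE //; field; lra.
by rewrite -phi_first_step //; ring.
Qed.

Lemma green_ge0 x : 0 <= green e a w x.
Proof.
have := return_prob_bnd; have := phi_bnd e w a_gt0 a_lt1 x => ? ?.
by apply: Rmult_le_pos; [left; apply: Rinv_0_lt_compat |]; lra.
Qed.

Lemma green_diag_ge1 : 1 <= green e a w w.
Proof.
have := return_prob_bnd => r_bnd; rewrite /green phi_diag // Rmult_1_r.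
by rewrite -Rinv_1; apply: Rinv_le_contravar; lra.
Qed.

End Green.

Lemma green_aut (T : finType) (e : rel T) (a : R) (s : T -> T) (w : T) :
  0 < a -> a < 1 -> bijective s -> (forall x y, e (s x) (s y) = e x y) ->
  deg e w <> 0%nat -> forall x, green e a (s w) (s x) = green e a w x.
Proof.
move=> a_gt0 a_lt1 s_bij s_aut deg_w.
have deg_sw : deg e (s w) <> 0%nat by rewrite deg_aut.
have s_sol : solves e a (delta w) (fun x => green e a (s w) (s x)).
  move=> x; rewrite (solves_aut s_bij s_aut (green_solves a_gt0 a_lt1 deg_sw)).
  by rewrite /delta (inj_eq (bij_inj s_bij)).
exact: (solves_unique a_gt0 a_lt1 s_sol (green_solves a_gt0 a_lt1 deg_w)).
Qed.

(* Started at v, the expected total number of steps before the first jump is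
   at most 1 / a; since v can also step to a third vertex y0, the expected
   number of visits to {u, v} is strictly smaller:
   a * (green v v + green u v) < 1.  The proof applies the maximum principle
   to D = 1 - a green v - a green u, which is superharmonic. *)
Lemma green_mass_lt (T : finType) (e : rel T) (a : R) (u v y0 : T) :
  0 < a -> a < 1 -> u != v -> deg e u <> 0%nat -> deg e v <> 0%nat ->
  e v y0 -> y0 != u -> y0 != v ->
  a * (green e a v v + green e a u v) < 1.
Proof.
move=> a_gt0 a_lt1 uv deg_u deg_v vy0 y0u y0v.
have gv_sol := green_solves a_gt0 a_lt1 deg_v.
have gu_sol := green_solves a_gt0 a_lt1 deg_u.
set gv := green e a v in gv_sol *; set gu := green e a u in gu_sol *.
set D := fun y => 1 + (- a * gv y + - a * gu y).
have D_excess x : a * (1 - delta v x - delta u x) + step_op e a D x <= D x.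
  rewrite /D !step_opD 2!step_opZ step_op_const (gv_sol x) (gu_sol x).
  by case: eqP => _; lra.
have delta_uv x : delta v x + delta u x <= 1.
  rewrite /delta; case: (eqVneq x v) => [->|_]; last by case: (x == u); lra.
  by rewrite eq_sym (negbTE uv); lra.
have D_ge0 x : 0 <= D x.
  apply: (@superharmonic_ge0 _ e a a_gt0 a_lt1 D) => z.
  by have := D_excess z; have := delta_uv z; nra.
have D_y0 : a <= D y0.
  have := D_excess y0; rewrite /delta (negbTE y0u) (negbTE y0v).
  by have := @step_op_le _ e a a_lt1 (fun _ => 0) D y0 (fun y _ => D_ge0 y);
    rewrite step_op_const; case: eqP => _; lra.
have D_v : step_op e a D v <= D v.
  by have := D_excess v; rewrite /delta eqxx eq_sym (negbTE uv); lra.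
have coef_gt0 : 0 < (1 - a) / INR (deg e v).
  by apply: Rdiv_lt_0_compat; [lra | apply: lt_0_INR; lia].
have step_D_v : (1 - a) / INR (deg e v) * D y0 <= step_op e a D v.
  rewrite /step_op; move/eqP/negbTE: (deg_v) => ->.
  by apply: Rmult_le_compat_l; [lra | exact: rsum_ge_term].
have : 0 < D v by nra.
rewrite /D; lra.
Qed.

Section NewNeighbour.
Variables (T : finType) (e e' : rel T) (a : R) (x y : T).
Hypotheses (nbr_x : forall z, e' x z = e x z || (z == y)) (xy_new : ~~ e x y).

Lemma deg_new_nbr : INR (deg e' x) = INR (deg e x) + 1.
Proof. by rewrite !deg_rsum (rsum_eq_pred _ nbr_x) rsum_predU1 //; ring. Qed.

Lemma step_op_new_nbr f : deg e x <> 0%nat ->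
  (INR (deg e x) + 1) * step_op e' a f x
  = INR (deg e x) * step_op e a f x + (1 - a) * f y.
Proof.
move=> deg_x; have deg_x' : deg e' x <> 0%nat.
  by move/(f_equal INR); rewrite deg_new_nbr /=; have := pos_INR (deg e x); lra.
rewrite /step_op; move/eqP/negbTE: (deg_x) => ->; move/eqP/negbTE: deg_x' => ->.
rewrite deg_new_nbr (rsum_eq_pred _ nbr_x) rsum_predU1 //.
by field; split; [apply: not_0_INR | have := pos_INR (deg e x); lra].
Qed.

End NewNeighbour.

Lemma step_op_same_nbr (T : finType) (e e' : rel T) (a : R) (x : T) f :
  e' x =1 e x -> step_op e' a f x = step_op e a f x.
Proof.
move=> same_nbr; rewrite /step_op (rsum_eq_pred _ same_nbr).
by have -> : deg e' x = deg e x by apply: eq_card => z; rewrite !inE same_nbr.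
Qed.

Lemma green_sum_aut (T : finType) (e : rel T) (a : R) (s : T -> T) (w : T) :
  0 < a -> a < 1 -> bijective s -> (forall x y, e (s x) (s y) = e x y) ->
  deg e w <> 0%nat -> rsum predT (green e a (s w)) = rsum predT (green e a w).
Proof.
move=> a_gt0 a_lt1 s_bij s_aut deg_w; rewrite (rsum_reindex _ _ s_bij).
by apply: rsum_eq_fun; exact: green_aut.
Qed.

Section AddEdge.
Variables (T : finType) (e : rel T) (u v : T).
Hypothesis uv : u != v.

Lemma add_edge_nbr_u z : add_edge e u v u z = e u z || (z == v).
Proof. by rewrite /add_edge eqxx (negbTE uv) /= orbF. Qed.

Lemma add_edge_nbr_v z : add_edge e u v v z = e v z || (z == u).
Proof. by rewrite /add_edge eqxx eq_sym (negbTE uv) /= orbF. Qed.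

Lemma add_edge_nbr_other x : x != u -> x != v -> add_edge e u v x =1 e x.
Proof. by move=> xu xv z; rewrite /add_edge (negbTE xu) (negbTE xv) !orbF. Qed.

Lemma add_edge_aut (s : T -> T) : injective s ->
  (forall x y, e (s x) (s y) = e x y) -> s u = v -> s v = u ->
  forall x y, add_edge e u v (s x) (s y) = add_edge e u v x y.
Proof.
move=> s_inj s_aut su sv x y.
have s_eq_u z : (s z == u) = (z == v) by rewrite -sv (inj_eq s_inj).
have s_eq_v z : (s z == v) = (z == u) by rewrite -su (inj_eq s_inj).
rewrite /add_edge s_aut !s_eq_u !s_eq_v -!orbA.
by congr (_ || _); rewrite orbC.
Qed.

End AddEdge.

(* Let f = green e a v.  In the new graph, f is
   generated by the source residual = f - step_op' f, which is supported on
   {u, v} since the edge uv only changes step_op at u and v; hence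
   f = residual v * green' v + residual u * green' u.  As the swap makes the
   two new Green masses equal, the old mass is (residual v + residual u)
   times the new one, and this factor is < 1 by green_mass_lt. *)
Section GreenMassIncreases.
Variables (T : finType) (e : rel T) (a : R) (u v : T) (s : T -> T).
Hypotheses (e_sym : symmetric e) (e_irr : irreflexive e).
Hypotheses (a_gt0 : 0 < a) (a_lt1 : a < 1).
Hypotheses (uv : u != v) (uv_nadj : ~~ e u v) (v_nbr : exists y, e v y).
Hypotheses (s_bij : bijective s) (s_aut : forall x y, e (s x) (s y) = e x y).
Hypotheses (sv : s v = u) (su : s u = v).

Lemma deg_v_neq0 : deg e v <> 0%nat.
Proof. by have [y0 vy0] := v_nbr; exact: deg_neq0 vy0. Qed.

Lemma deg_u_neq0 : deg e u <> 0%nat.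
Proof. by rewrite -sv deg_aut //; exact: deg_v_neq0. Qed.

Let e' := add_edge e u v.

Lemma add_edge_deg_v_neq0 : deg e' v <> 0%nat.
Proof. by apply: (deg_neq0 (y := u)); rewrite /e' add_edge_nbr_v // eqxx orbT. Qed.

Lemma add_edge_deg_u_neq0 : deg e' u <> 0%nat.
Proof. by apply: (deg_neq0 (y := v)); rewrite /e' add_edge_nbr_u // eqxx orbT. Qed.

(* The old Green's function at v, and the source generating it in the new
   graph: residual x = f x - step_op' f x vanishes outside {u, v}. *)
Let f := green e a v.
Let residual (x : T) := f x - step_op e' a f x.

Lemma old_green_decomp x :
  f x = residual v * green e' a v x + residual u * green e' a u x.
Proof.
have f_sol := green_solves a_gt0 a_lt1 deg_v_neq0; rewrite -/f in f_sol.
have f_sol' : solves e' a (fun x => residual v * delta v x + residual u * delta u x) f.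
  move=> y /=; rewrite /delta; case: (eqVneq y v) => [->|yv].
    by rewrite eq_sym (negbTE uv) /residual; ring.
  case: (eqVneq y u) => [->|yu]; first by rewrite /residual; ring.
  rewrite (step_op_same_nbr a f (add_edge_nbr_other e yu yv)) {1}(f_sol y).
  by rewrite /delta (negbTE yv); ring.
exact: (solves_unique a_gt0 a_lt1 f_sol'
  (solves_lin _ _ (green_solves a_gt0 a_lt1 add_edge_deg_v_neq0)
     (green_solves a_gt0 a_lt1 add_edge_deg_u_neq0))).
Qed.

Lemma residual_sum :
  (INR (deg e v) + 1) * (residual v + residual u) = INR (deg e v) + a * (f v + f u).
Proof.
have vu_nadj : ~~ e v u by rewrite e_sym.
have new_v := step_op_new_nbr a (add_edge_nbr_v e uv) vu_nadj f deg_v_neq0.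
have new_u := step_op_new_nbr a (add_edge_nbr_u e uv) uv_nadj f deg_u_neq0.
have deg_uv : INR (deg e u) = INR (deg e v) by rewrite -sv deg_aut.
have f_v := green_solves a_gt0 a_lt1 deg_v_neq0 v.
have f_u := green_solves a_gt0 a_lt1 deg_v_neq0 u.
rewrite -/f /delta eqxx in f_v; rewrite -/f /delta (negbTE uv) in f_u.
by rewrite deg_uv -/e' in new_u; rewrite -/e' in new_v; rewrite /residual; nra.
Qed.

(* The total source is < 1, by green_mass_lt and green v u = green u v. *)
Lemma residual_sum_lt1 : residual v + residual u < 1.
Proof.
have [y0 vy0] := v_nbr.
have y0u : y0 != u by apply: contraTneq vy0 => ->; rewrite e_sym.
have y0v : y0 != v by apply: contraTneq vy0 => ->; rewrite e_irr.
have f_uv : f u = green e a u v.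
  by have := green_aut a_gt0 a_lt1 s_bij s_aut deg_u_neq0 v; rewrite su sv.
have mass_uv : a * (f v + f u) < 1.
  rewrite f_uv; exact: green_mass_lt a_gt0 a_lt1 uv deg_u_neq0 deg_v_neq0 vy0 y0u y0v.
by have := residual_sum; have := pos_INR (deg e v); nra.
Qed.

Lemma green_mass_increases :
  rsum predT (green e a v) < rsum predT (green (add_edge e u v) a v).
Proof.
have s'_aut : forall x y, e' (s x) (s y) = e' x y.
  exact: add_edge_aut (bij_inj s_bij) s_aut su sv.
have mass'_u : rsum predT (green e' a u) = rsum predT (green e' a v).
  by rewrite -(green_sum_aut a_gt0 a_lt1 s_bij s'_aut add_edge_deg_v_neq0) sv.
have mass_f : rsum predT f = (residual v + residual u) * rsum predT (green e' a v).
  rewrite (rsum_eq_fun _ old_green_decomp) rsumD (rsumZ _ (residual v)).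
  by rewrite (rsumZ _ (residual u)) mass'_u; ring.
have new_mass_ge1 : 1 <= rsum predT (green e' a v).
  apply: Rle_trans (green_diag_ge1 a_gt0 a_lt1 add_edge_deg_v_neq0) _.
  exact: rsum_ge_term (fun x _ => green_ge0 a_gt0 a_lt1 add_edge_deg_v_neq0 x) _.
have := residual_sum_lt1; rewrite -/f -/e' mass_f; nra.
Qed.

End GreenMassIncreases.

Theorem theorem5p4 (T : finType) (e : rel T)
  (e_sym : symmetric e) (e_irr : irreflexive e)
  (a : R) (ha0 : Rlt 0 a) (ha1 : Rlt a 1)
  (u v : T) (huv : u != v) (hnadj : ~~ e u v)
  (hv : exists y, e v y)
  (s : T -> T) (s_bij : bijective s)
  (s_aut : forall x y, e (s x) (s y) = e x y)
  (hsv : s v = u) (hsu : s u = v) :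
  let q := fun _ : T => Rinv (INR #|T|) in
  Rgt (pagerank (add_edge e u v) a q v) (pagerank e a q v) /\
  Rgt (pagerank (add_edge e u v) a q u) (pagerank e a q u).
Proof.
move=> q; rewrite /q !pagerank_green.
have mass_lt := green_mass_increases e_sym e_irr ha0 ha1 huv hnadj hv s_bij s_aut hsv hsu.
have deg_v := deg_v_neq0 hv.
have deg'_v := add_edge_deg_v_neq0 (e := e) huv.
have s'_aut := add_edge_aut (bij_inj s_bij) s_aut hsu hsv.
have coef_gt0 : 0 < a / INR #|T|.
  by apply: Rdiv_lt_0_compat => //; apply/lt_0_INR/ltP/card_gt0P; exists u.
have mass_u : rsum predT (green e a u) = rsum predT (green e a v).
  by rewrite -(green_sum_aut ha0 ha1 s_bij s_aut deg_v) hsv.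
have mass'_u : rsum predT (green (add_edge e u v) a u)
             = rsum predT (green (add_edge e u v) a v).
  by rewrite -(green_sum_aut ha0 ha1 s_bij s'_aut deg'_v) hsv.
rewrite mass_u mass'_u.
by split; apply: Rmult_lt_compat_l.
Qed.
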